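(* Let $N=\{1,\dots,n\}$ and let $F:2^N\to\mathbb{R}$ be quasi-submodular. Run the minimization procedure (described in the context) from $X_0=\emptyset$ and let $Q_+$ be its output, and from $X_0=N$ and let $S_+$ be its output. Then every local minimum $P$ of $F$ satisfies $Q_+\subseteq P\subseteq S_+$.
   Context: For $A\subseteq N$ and $i\in N$, write $A+i=A\cup\{i\}$, $A-i=A\setminus\{i\}$, and $F(i\mid A)=F(A+i)-F(A)$. $F$ is quasi-submodular if for all $X,Y\subseteq N$ both hold: $F(X\cap Y)\ge F(X)\Rightarrow F(Y)\ge F(X\cup Y)$, and $F(X\cap Y)>F(X)\Rightarrow F(Y)>F(X\cup Y)$. A set $X\subseteq N$ is a local minimum of $F$ if $F(X-i)\ge F(X)$ for all $i\in X$ and $F(X+j)\ge F(X)$ for all $j\in N\setminus X$. Minimization procedure: given $X_0\subseteq N$, for $t=0,1,2,\dots$: let $U_t=\{u\in N\setminus X_t: F(u\mid X_t)<0\}$ and $Y_t=X_t\cup U_t$; let $D_t=\{d\in X_t: F(d\mid Y_t-d)>0\}$ and $X_{t+1}=Y_t\setminus D_t$; if $X_{t+1}=X_t$, stop and output $X_t$; otherwise continue with $t+1$. *)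

(* Ground set N = {1,...,n} is modelled as 'I_n. *)
From mathcomp Require Import all_boot all_order all_algebra.
Set Implicit Arguments. Unset Strict Implicit. Unset Printing Implicit Defensive.
Import Order.TTheory GRing.Theory Num.Theory.
Local Open Scope ring_scope.

Section Defs.
Variables (R : realFieldType) (n : nat).
Implicit Types (F : {set 'I_n} -> R) (A X Y : {set 'I_n}).

Definition marg F (i : 'I_n) A : R := F (i |: A) - F A.

Definition quasi_submodular F : Prop :=
  forall X Y,
    (F X <= F (X :&: Y) -> F (X :|: Y) <= F Y) /\
    (F X < F (X :&: Y) -> F (X :|: Y) < F Y).

Definition local_min F X : Prop :=
  (forall i, i \in X -> F X <= F (X :\ i)) /\
  (forall j, j \notin X -> F X <= F (j |: X)).

Definition U_set F X : {set 'I_n} := [set u | (u \notin X) && (marg F u X < 0)].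
Definition Y_set F X : {set 'I_n} := X :|: U_set F X.
Definition D_set F X : {set 'I_n} :=
  [set d | (d \in X) && (0 < marg F d (Y_set F X :\ d))].
Definition step F X : {set 'I_n} := Y_set F X :\: D_set F X.

Definition proc_output F (X0 X : {set 'I_n}) : Prop :=
  exists t : nat, X = iter t (step F) X0 /\ step F X = X.

End Defs.

From mathcomp Require Import all_boot all_order all_algebra.
Import Order.TTheory GRing.Theory Num.Theory.
Local Open Scope ring_scope.

(* A local minimum P is an invariant of the procedure in both directions.
   Going up from X ⊆ P: if u ∉ P were added, i.e. F(X + u) < F(X), then
   quasi-submodularity applied to X + u and P (meeting in X, joining in P + u)
   gives F(P + u) < F(P).  Going down from P ⊆ X: if d ∈ P were deleted, i.e.
   F(Y - d) < F(Y), then quasi-submodularity applied to P and Y - d (meeting in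
   P - d, joining in Y) gives F(P - d) < F(P).  Both contradict local
   minimality, so iterating from ∅ stays below P and iterating from N above. *)

Section LocalMinInvariant.
Variables (R : realFieldType) (n : nat) (F : {set 'I_n} -> R).
Hypothesis qsF : quasi_submodular F.
Variable P : {set 'I_n}.
Hypothesis lmP : local_min F P.
Implicit Types X : {set 'I_n}.

Lemma U_set_sub_local_min X : X \subset P -> U_set F X \subset P.
Proof.
move=> sXP; apply/subsetP => u; rewrite inE /marg subr_lt0 => /andP[uNX ltF].
apply/negPn/negP => uNP.
have meet : (u |: X) :&: P = X.
  rewrite setIUl (setIidPl sXP); apply/setUidPr.
  by apply/subsetP => y; rewrite !inE => /andP[/eqP-> /(negP uNP)].
have join : (u |: X) :|: P = u |: P by rewrite -setUA (setUidPr sXP).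
have := (qsF (u |: X) P).2; rewrite meet join => /(_ ltF).
by rewrite ltNge lmP.2.
Qed.

Lemma local_min_notin_D_set X d : P \subset X -> d \in P -> d \notin D_set F X.
Proof.
move=> sPX dP; set Y := Y_set F X.
have sPY : P \subset Y by apply: subset_trans sPX (subsetUl _ _).
have dY : d \in Y by apply: (subsetP sPY).
rewrite inE /marg setD1K // subr_gt0; apply/nandP; right; rewrite -leNgt.
have meet : P :&: (Y :\ d) = P :\ d by rewrite setIDA (setIidPl sPY).
have join : P :|: (Y :\ d) = Y.
  by rewrite -{1}(setUidPr (_ : [set d] \subset P)) ?sub1set // setUAC setD1K // (setUidPl sPY).
by have := (qsF P (Y :\ d)).1; rewrite meet join; apply; apply: lmP.1.
Qed.

Lemma step_sub_local_min X : X \subset P -> step F X \subset P.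
Proof.
move=> sXP; apply: subset_trans (subsetDl _ _) _.
by rewrite subUset sXP U_set_sub_local_min.
Qed.

Lemma local_min_sub_step X : P \subset X -> P \subset step F X.
Proof.
move=> sPX; rewrite subsetD (subset_trans sPX (subsetUl _ _)) /=.
by rewrite disjoint_subset; apply/subsetP => d dP; rewrite inE; exact: local_min_notin_D_set.
Qed.

Lemma iter_step_sub_local_min t : iter t (step F) set0 \subset P.
Proof. by elim: t => [|t IH]; [apply: sub0set | apply: step_sub_local_min]. Qed.

Lemma local_min_sub_iter_step t : P \subset iter t (step F) setT.
Proof. by elim: t => [|t IH]; [apply: subsetT | apply: local_min_sub_step]. Qed.

End LocalMinInvariant.

Theorem lemma3 (R : realFieldType) (n : nat) (F : {set 'I_n} -> R)
  (Qp Sp : {set 'I_n}) :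
  quasi_submodular F ->
  proc_output F set0 Qp ->
  proc_output F setT Sp ->
  forall P : {set 'I_n}, local_min F P -> (Qp \subset P) && (P \subset Sp).
Proof.
move=> qsF [t [-> _]] [s [-> _]] P lmP.
by rewrite iter_step_sub_local_min ?local_min_sub_iter_step.
Qed.
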